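(* Let $G$ be a connected graph that is $(5,\epsilon)$-distance-almost-uniform. Then $G^4$ is $(2,\epsilon)$-distance-almost-uniform and $diam(G^4)=\lceil diam(G)/4\rceil$.
   Context: For a graph $G$ on $n$ vertices and $v\in V(G)$, $A_s(v)$ is the set of vertices at distance exactly $s$ from $v$. $G$ is $(k,\epsilon)$-distance-almost-uniform if there exists $r$ such that $\max_{i=0}^{k-1}|A_{r+i}(u)|\ge n(1-\epsilon)$ for all $u\in V(G)$. For an undirected graph $G=(V,E)$, $G^k$ is the graph on vertex set $V$ with edge set $\{uv: 0<d_G(u,v)\le k\}$. *)

From mathcomp Require Import all_boot all_order all_algebra.
Set Implicit Arguments. Unset Strict Implicit. Unset Printing Implicit Defensive.
Import Order.TTheory GRing.Theory Num.Theory.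

Definition simple_graph (T : finType) (e : rel T) : Prop :=
  symmetric e /\ irreflexive e.

Fixpoint dist_le (T : finType) (e : rel T) (k : nat) (u v : T) : bool :=
  match k with
  | 0 => u == v
  | k'.+1 => dist_le e k' u v || [exists w, dist_le e k' u w && e w v]
  end.

(* graph distance d_G(u,v): least k with d_G(u,v) <= k (equals #|T| if unreachable;
   only used for connected graphs, where it is the true distance) *)
Definition dist (T : finType) (e : rel T) (u v : T) : nat :=
  find (fun k => dist_le e k u v) (iota 0 #|T|).

Definition connected (T : finType) (e : rel T) : Prop :=
  forall u v : T, connect e u v.

Definition sphere (T : finType) (e : rel T) (s : nat) (v : T) : {set T} :=
  [set x | dist e v x == s].

Definition dist_almost_uniform (R : realFieldType) (T : finType) (e : rel T)
    (k : nat) (eps : R) : Prop :=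
  exists r : nat, forall u : T,
    (#|T|%:R * (1 - eps) <= (\max_(i < k) #|sphere e (r + i) u|)%:R)%R.

Definition graph_pow (T : finType) (e : rel T) (k : nat) : rel T :=
  fun u v => (u != v) && dist_le e k u v.

Definition diam (T : finType) (e : rel T) : nat :=
  \max_(u : T) \max_(v : T) dist e u v.

From mathcomp Require Import all_boot all_order all_algebra.
From mathcomp Require Import zify.
Set Implicit Arguments. Unset Strict Implicit. Unset Printing Implicit Defensive.
Import Order.TTheory GRing.Theory Num.Theory.

(* A walk of length at most m * n in G is exactly a walk of at most n steps of
   G^m (cut it into blocks of m steps), so d_{G^m}(u,v) = ceil (d_G(u,v) / m).
   Taking maxima gives the diameter of G^m; and s |-> ceil (s / m) maps the
   m + 1 consecutive radii r, ..., r + m to ceil (r / m) or ceil (r / m) + 1,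
   so every G-sphere of that window lies inside one of two consecutive
   G^m-spheres. *)

Lemma leq_ceil_divLR d m q : 0 < m -> ((d + m.-1) %/ m <= q) = (d <= q * m).
Proof. by move=> m_gt0; rewrite -ltnS ltn_divLR // mulSn; lia. Qed.

Lemma bigmax_nondecreasing (I : finType) (f : nat -> nat) (F : I -> nat) :
  {homo f : a b / a <= b} -> f 0 = 0 ->
  f (\max_(i : I) F i) = \max_(i : I) f (F i).
Proof.
move=> f_homo f0; apply: (big_morph f _ f0) => a b.
by case: (leqP a b) => [ab | /ltnW ba];
  [rewrite !(maxn_idPr _) ?f_homo | rewrite !(maxn_idPl _) ?f_homo].
Qed.

Section Walks.
Variables (T : finType) (f : rel T).

Lemma dist_le_leq k k' u v :
  k <= k' -> dist_le f k u v -> dist_le f k' u v.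
Proof.
move=> /subnKC <-; elim: (k' - k) => [|n IHn] ukv; first by rewrite addn0.
by rewrite addnS /= IHn.
Qed.

Lemma dist_le_addP a b u v :
  reflect (exists2 w, dist_le f a u w & dist_le f b w v) (dist_le f (a + b) u v).
Proof.
elim: b v => [|b IHb] v.
  rewrite addn0; apply: (iffP idP) => [uav | [w uaw /eqP <-] //].
  by exists v; rewrite /=.
rewrite addnS /=; apply: (iffP orP).
  case=> [/IHb [w uaw wbv] | /existsP [x /andP [/IHb [w uaw wbx] xv]]].
    by exists w; rewrite //= wbv.
  by exists w; rewrite //=; apply/orP; right; apply/existsP; exists x; rewrite wbx.
case=> w uaw /orP [wbv | /existsP [x /andP [wbx xv]]].
  by left; apply/IHb; exists w.
by right; apply/existsP; exists x; rewrite xv andbT; apply/IHb; exists w.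
Qed.

Lemma dist_le_path x p : path f x p -> dist_le f (size p) x (last x p).
Proof.
elim: p x => [|y p IHp] x; first by rewrite /= eqxx.
case/andP=> fxy yp; rewrite -[size _]add1n.
apply/dist_le_addP; exists y; last exact: IHp.
by apply/orP; right; apply/existsP; exists x; rewrite eqxx.
Qed.

(* A shortest walk visits no vertex twice, hence has fewer than #|T| steps. *)
Lemma dist_le_connect u v : connect f u v -> dist_le f #|T|.-1 u v.
Proof.
case/connectP=> p fp ->; have [q fq uq _] := shortenP fp.
apply: dist_le_leq (dist_le_path fq).
by have := max_card (mem (u :: q)); rewrite (card_uniqP uq) /=; lia.
Qed.

Lemma dist_leE u v n :
  dist_le f #|T|.-1 u v -> dist_le f n u v = (dist f u v <= n).
Proof.
move=> reach; have T_gt0 : 0 < #|T| by apply/card_gt0P; exists u.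
have has_radius : has (fun k => dist_le f k u v) (iota 0 #|T|).
  by apply/hasP; exists #|T|.-1; rewrite // mem_iota; lia.
have dist_lt : dist f u v < #|T| by rewrite -[#|T|](size_iota 0) -has_find.
apply/idP/idP => [unv | /dist_le_leq]; last first.
  by apply; have := nth_find 0 has_radius; rewrite nth_iota // add0n.
rewrite leqNgt; apply/negP => ltn_dist.
by have := before_find 0 ltn_dist; rewrite nth_iota ?add0n ?unv //; lia.
Qed.

End Walks.

Section GraphPower.
Variables (T : finType) (e : rel T) (m : nat).

Lemma dist_le_graph_pow n u v :
  dist_le (graph_pow e m) n u v = dist_le e (m * n) u v.
Proof.
elim: n v => [|n IHn] v; first by rewrite muln0.
rewrite mulnS addnC; apply/idP/dist_le_addP.
  case/orP=> [unv | /existsP [w /andP [unw /andP [_ wmv]]]].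
    by exists v; rewrite -?IHn // (dist_le_leq (leq0n m)) /=.
  by exists w; rewrite -?IHn.
case=> w unw wmv; have [<- | wv] := eqVneq w v.
  by apply: (dist_le_leq (leqnSn n)); rewrite IHn.
rewrite /=; apply/orP; right; apply/existsP; exists w.
by rewrite IHn unw /graph_pow wv.
Qed.

Hypotheses (e_connected : connected e) (m_gt0 : 0 < m).

Lemma dist_graph_pow u v :
  dist (graph_pow e m) u v = (dist e u v + m.-1) %/ m.
Proof.
have reach := dist_le_connect (e_connected u v).
have reach_pow : dist_le (graph_pow e m) #|T|.-1 u v.
  by rewrite dist_le_graph_pow (dist_le_leq _ reach) ?leq_pmull.
have le_dist n : (dist (graph_pow e m) u v <= n) = ((dist e u v + m.-1) %/ m <= n).
  by rewrite -(dist_leE _ reach_pow) dist_le_graph_pow (dist_leE _ reach)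
             leq_ceil_divLR // mulnC.
by apply/eqP; rewrite eqn_leq le_dist leqnn -le_dist leqnn.
Qed.

Lemma sphere_sub_graph_pow s u :
  sphere e s u \subset sphere (graph_pow e m) ((s + m.-1) %/ m) u.
Proof. by apply/subsetP => x; rewrite !inE dist_graph_pow => /eqP ->. Qed.

Lemma diam_graph_pow : diam (graph_pow e m) = (diam e + m.-1) %/ m.
Proof.
have ceil_homo : {homo (fun d => (d + m.-1) %/ m) : a b / a <= b}.
  by move=> a b ab; apply: leq_div2r; rewrite leq_add2r.
have ceil0 : (0 + m.-1) %/ m = 0 by rewrite divn_small //; lia.
have ceil_max I F := bigmax_nondecreasing (I := I) F ceil_homo ceil0.
rewrite /diam /= ceil_max; apply: eq_bigr => u _.
by rewrite ceil_max; apply: eq_bigr => v _; rewrite dist_graph_pow.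
Qed.

Lemma dist_almost_uniform_graph_pow (R : realFieldType) (eps : R) :
  dist_almost_uniform e m.+1 eps -> dist_almost_uniform (graph_pow e m) 2 eps.
Proof.
case=> r unif; set c := (r + m.-1) %/ m; exists c => u.
apply: le_trans (unif u) _; rewrite ler_nat; apply/bigmax_leqP => i _.
have c_le : c <= (r + i + m.-1) %/ m by apply: leq_div2r; lia.
have le_c1 : (r + i + m.-1) %/ m <= c.+1.
  have r_le : r <= c * m by rewrite -leq_ceil_divLR.
  by rewrite leq_ceil_divLR // mulSn; have := ltn_ord i; lia.
have j_lt2 : (r + i + m.-1) %/ m - c < 2 by lia.
apply: leq_trans (leq_bigmax_cond (Ordinal j_lt2) isT).
by rewrite /= subnKC // subset_leq_card ?sphere_sub_graph_pow.
Qed.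

End GraphPower.

Theorem proposition10 (R : realFieldType) (T : finType) (e : rel T) (eps : R) :
  simple_graph e -> connected e -> dist_almost_uniform e 5 eps ->
  dist_almost_uniform (graph_pow e 4) 2 eps /\
  diam (graph_pow e 4) = (diam e + 3) %/ 4.
Proof.
move=> _ e_connected unif; split.
  exact: (dist_almost_uniform_graph_pow e_connected (isT : 0 < 4)).
exact: (diam_graph_pow e_connected (isT : 0 < 4)).
Qed.
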